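(* Let $G$ be a finite non-cyclic group. (i) If $\psi'(G)\ge \frac{19}{43}$, then $2$ divides $|G|$. (ii) If $\psi'(G)>\frac{31}{77}$, then $2$ or $3$ divides $|G|$.
   Context: For a finite group $G$, $\psi(G)=\sum_{x\in G} o(x)$ and $\psi'(G)=\psi(G)/\psi(\mathcal{C}_{|G|})$, where $\mathcal{C}_n$ is the cyclic group of order $n$. *)

From mathcomp Require Import all_boot all_order all_algebra all_fingroup all_solvable.
Set Implicit Arguments. Unset Strict Implicit. Unset Printing Implicit Defensive.
Import GRing.Theory Num.Theory.

Definition psi (gT : finGroupType) (G : {group gT}) : nat := \sum_(x in G) #[x]%g.

(* psi of the cyclic group C_n, realized as Z/nZ = {0,...,n-1} under addition:
   the additive order of i in Z/nZ is n / gcd(i, n). *)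
Definition psi_cyclic (n : nat) : nat := \sum_(i < n) n %/ gcdn i n.

Definition psi' (gT : finGroupType) (G : {group gT}) : rat :=
  ((psi G)%:R / (psi_cyclic #|G|)%:R)%R.

From mathcomp Require Import all_boot all_order all_algebra all_fingroup all_solvable.
From mathcomp Require Import zify.
Import Order.TTheory GRing.Theory Num.Theory.
Set Implicit Arguments.
Unset Strict Implicit.
Unset Printing Implicit Defensive.

(* Induction on |G|, where all prime divisors of |G| are at least q >= 3 and p
   is the largest one.  If some cyclic subgroup <x> has index < p, the Sylow
   p-subgroup P = <x_p> is cyclic and normal.  Summing element orders coset by
   coset gives psi(G) <= psi(P) psi(G/P), while psi(C_|G|) = psi(P) psi(C_|G/P|);
   so psi'(G) <= psi'(G/P) and induction applies when G/P is not cyclic.  When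
   G/P is cyclic, C_G(P)/P is a proper subgroup of it, and only the cosets in
   C_G(P)/P contribute more than |P| #[c]; this gives psi'(G) <= 1/7 + 1/4.
   Otherwise every cyclic subgroup has index >= p, so p psi(G) <= |G|^2, which
   against psi(C_n) >= n^2 q/(p+1) gives psi'(G) <= 6/(5q) when p >= 5; the
   remaining case is a 3-group, where a finer count yields psi'(G) < 19/43. *)

Lemma gcdnM_coprime k a b :
  coprime a b -> gcdn k (a * b) = gcdn k a * gcdn k b.
Proof.
move=> co_ab; rewrite muln_gcdl !muln_gcdr gcdnA -muln_gcdr [a * k]mulnC -muln_gcdr.
by rewrite -gcdnA (gcdnC b) (eqP co_ab) gcdn1 muln1.
Qed.

Lemma divn_gcdnM_coprime k a b : 0 < a -> 0 < b -> coprime a b ->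
  (a * b) %/ gcdn k (a * b) = a %/ gcdn k a * (b %/ gcdn k b).
Proof.
move=> a_gt0 b_gt0 co_ab; rewrite gcdnM_coprime //.
rewrite -{1}(divnK (dvdn_gcdr k a)) -{1}(divnK (dvdn_gcdr k b)).
by rewrite mulnACA mulnK // muln_gt0 !gcdn_gt0 a_gt0 b_gt0 !orbT.
Qed.

Lemma sum_chinese a b (F : nat -> nat -> nat) : 0 < a -> 0 < b -> coprime a b ->
  \sum_(k < a * b) F (k %% a) (k %% b) = \sum_(i < a) \sum_(j < b) F i j.
Proof.
move=> a_gt0 b_gt0 co_ab; have ab_gt0 : 0 < a * b by rewrite muln_gt0 a_gt0.
have chinese_modlr (i : 'I_a) (j : 'I_b) :
    (chinese a b i j %% (a * b)) %% a = i /\ (chinese a b i j %% (a * b)) %% b = j.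
  rewrite (modn_dvdm _ (dvdn_mulr _ (dvdnn a))) (modn_dvdm _ (dvdn_mull _ (dvdnn b))).
  by rewrite chinese_modl // chinese_modr // !modn_small.
rewrite pair_bigA /=.
pose crt (ij : 'I_a * 'I_b) : 'I_(a * b) :=
  Ordinal (ltn_pmod (chinese a b ij.1 ij.2) ab_gt0).
rewrite (reindex crt) /=; last first.
  exists (fun k : 'I_(a * b) => (Ordinal (ltn_pmod k a_gt0), Ordinal (ltn_pmod k b_gt0))).
    by move=> [i j] _; have [ei ej] := chinese_modlr i j; congr pair; apply: val_inj.
  by move=> k _; apply: val_inj => /=; rewrite -chinese_mod // modn_small.
by apply: eq_bigr => -[i j] _ /=; have [-> ->] := chinese_modlr i j.
Qed.

Lemma psi_cyclicM a b : 0 < a -> 0 < b -> coprime a b ->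
  psi_cyclic (a * b) = psi_cyclic a * psi_cyclic b.
Proof.
move=> a_gt0 b_gt0 co_ab; rewrite /psi_cyclic big_distrl /=.
under [RHS]eq_bigr => i _ do rewrite big_distrr /=.
rewrite -(sum_chinese (fun i j => a %/ gcdn i a * (b %/ gcdn j b))) //.
by apply: eq_bigr => k _; rewrite divn_gcdnM_coprime // !gcdn_modl.
Qed.

Lemma psi_cyclic1 : psi_cyclic 1 = 1.
Proof. by rewrite /psi_cyclic big_ord1. Qed.

Lemma psi_cyclic_gt0 n : 0 < n -> 0 < psi_cyclic n.
Proof. by case: n => // n _; rewrite /psi_cyclic big_ord_recl gcd0n divnn ltn_addr. Qed.

(* Split [0, r^(a+1)) into blocks of length r: in each block only the multiple
   of r fails to be coprime to r^(a+1). *)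
Lemma psi_cyclic_primeS r a : prime r ->
  psi_cyclic (r ^ a.+1) = psi_cyclic (r ^ a) + (r - 1) * r ^ (2 * a + 1).
Proof.
move=> pr_r; have r_gt0 := prime_gt0 pr_r.
rewrite /psi_cyclic -!(big_mkord xpredT (fun k => _ %/ gcdn k _)) expnSr.
set N := r ^ a; rewrite big_nat_mul.
have coprime_block i j : i * r < j < i.+1 * r -> coprime j (N * r).
  rewrite mulSn => /andP[lt_ir_j lt_j_iSr]; rewrite -expnSr coprimeXr // coprime_sym.
  rewrite prime_coprime // /dvdn -(subnKC (ltnW lt_ir_j)) modnMDl modn_small; lia.
under eq_bigr => i _.
  rewrite big_ltn ?ltn_pmul2r // -muln_gcdl divnMr //.
  rewrite (eq_big_nat _ _ (F2 := fun _ => N * r)); last first.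
    by move=> j /coprime_block /eqP ->; rewrite divn1.
  rewrite sum_nat_const_nat (_ : i.+1 * r - (i * r).+1 = r - 1); last by rewrite mulSn; lia.
  over.
rewrite big_split /= sum_nat_const_nat subn0; congr addn.
rewrite /N mulnCA -expnSr -expnD; congr (_ * r ^ _); lia.
Qed.

Lemma psi_cyclic_primeX r a : prime r ->
  (r + 1) * psi_cyclic (r ^ a) = r ^ (2 * a + 1) + 1.
Proof.
move=> pr_r; have r_gt0 := prime_gt0 pr_r.
elim: a => [|a IHa]; first by rewrite /psi_cyclic big_ord1 gcd0n divnn muln1.
rewrite psi_cyclic_primeS // mulnDr IHa mulnA.
have -> : 2 * a.+1 + 1 = 2 + (2 * a + 1) by lia.
rewrite (expnD r 2) [(r + 1) * _]mulnC -subn_sqr exp1n mulnBl mul1n.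
by rewrite addnAC subnKC // leq_pmull // expn_gt0 r_gt0.
Qed.

(* Peel off the largest prime r of n: psi_cyclic (r ^ e) >= r ^ (2e) * r / (r + 1),
   and the prime divisors of the cofactor are all < r. *)
Lemma sqr_le_psi_cyclic lo hi n : 0 < n -> lo <= hi ->
  (forall r, prime r -> r %| n -> lo <= r < hi) -> lo * n ^ 2 <= hi * psi_cyclic n.
Proof.
elim/ltn_ind: n hi => n IHn hi n_gt0 le_lo_hi primes_n.
have [n_le1 | n_gt1] := leqP n 1.
  by rewrite (_ : n = 1) ?psi_cyclic1 ?muln1 //; lia.
set r := max_pdiv n; have pr_r : prime r by apply: max_pdiv_prime.
have r_n : r %| n by apply: max_pdiv_dvd.
have [m co_rm def_n] := pfactor_coprime pr_r n_gt0; set e := logn r n in def_n.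
have [m_gt0 re_gt0] : 0 < m /\ 0 < r ^ e by apply/andP; rewrite -muln_gt0 -def_n.
have /andP[le_lo_r lt_r_hi] := primes_n r pr_r r_n.
have lt_mn : m < n.
  rewrite def_n ltn_Pmulr // -[1](expn0 r) ltn_exp2l ?prime_gt1 //.
  by rewrite logn_gt0 mem_primes pr_r n_gt0 r_n.
have IHm : lo * m ^ 2 <= r * psi_cyclic m.
  apply: IHn => // s pr_s s_m; have s_n : s %| n by rewrite def_n dvdn_mulr.
  have /andP[-> _] := primes_n s pr_s s_n.
  rewrite ltn_neqAle max_pdiv_max ?mem_primes ?pr_s ?n_gt0 ?s_n // andbT.
  by apply: contraTneq s_m => ->; rewrite -prime_coprime.
have le_psi_re : r ^ (2 * e + 1) <= (r + 1) * psi_cyclic (r ^ e).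
  by rewrite psi_cyclic_primeX // leq_addr.
rewrite def_n psi_cyclicM ?coprimeXr 1?coprime_sym //.
have -> : lo * (m * r ^ e) ^ 2 = lo * m ^ 2 * r ^ (2 * e).
  by rewrite expnMn mulnA -expnM [e * 2]mulnC.
apply: (@leq_trans (r * psi_cyclic m * r ^ (2 * e))); first by rewrite leq_mul2r IHm orbT.
rewrite mulnAC -expnS -addn1 mulnCA mulnC leq_mul2l; apply/orP; right.
by apply: (leq_trans le_psi_re); rewrite leq_mul2r addn1 lt_r_hi orbT.
Qed.

Lemma psi_cyclic_primeX_ge4 r k : prime r -> 5 <= r -> 0 < k ->
  4 * r ^ k <= psi_cyclic (r ^ k).
Proof.
move=> pr_r r_ge5 k_gt0; rewrite -(@leq_pmul2l (r + 1)) ?addn_gt0 ?orbT //.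
rewrite psi_cyclic_primeX // (_ : 2 * k + 1 = k.+1 + k); last by lia.
apply: leq_trans (leq_addr 1 _); rewrite expnD mulnA leq_mul2r; apply/orP; right.
apply: (@leq_trans (r ^ 2)); first by rewrite -mulnn; nia.
by rewrite leq_pexp2l ?prime_gt0.
Qed.

Lemma psi_cyclic_primeS_ge7 r b : prime r -> 3 <= r ->
  7 * psi_cyclic (r ^ b) <= psi_cyclic (r ^ b.+1).
Proof.
move=> pr_r r_ge3; rewrite -(@leq_pmul2l (r + 1)) ?addn_gt0 ?orbT // mulnCA.
rewrite !psi_cyclic_primeX // (_ : 2 * b.+1 + 1 = 2 + (2 * b + 1)); last by lia.
have : 3 <= r ^ (2 * b + 1).
  by rewrite (leq_trans r_ge3) // -{1}(expn1 r) leq_exp2l ?prime_gt1 // addn1.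
have : 9 <= r ^ 2 by rewrite -mulnn; nia.
rewrite (expnD r 2); move: (r ^ 2) (r ^ (2 * b + 1)) => R X; nia.
Qed.

Lemma psi_cyclic_divp_ge7 r n : prime r -> 3 <= r -> 0 < n -> r %| n ->
  7 * psi_cyclic (n %/ r) <= psi_cyclic n.
Proof.
move=> pr_r r_ge3 n_gt0 r_n; have [m co_rm def_n] := pfactor_coprime pr_r n_gt0.
have e_gt0 : 0 < logn r n by rewrite logn_gt0 mem_primes pr_r n_gt0 r_n.
have [m_gt0 _] : 0 < m /\ 0 < r ^ logn r n by apply/andP; rewrite -muln_gt0 -def_n.
rewrite def_n -(prednK e_gt0) expnSr mulnA mulnK ?prime_gt0 // -mulnA -expnSr.
have co_mr k : coprime m (r ^ k) by rewrite coprimeXr // coprime_sym.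
rewrite !psi_cyclicM ?m_gt0 ?expn_gt0 ?prime_gt0 //.
by rewrite mulnCA leq_mul2l psi_cyclic_primeS_ge7 ?orbT.
Qed.

Lemma ler_frac_nat a b c d : 0 < b -> 0 < d ->
  (a%:R / b%:R <= c%:R / d%:R :> rat)%R = (a * d <= c * b).
Proof.
move=> b_gt0 d_gt0; rewrite ler_pdivrMr ?ltr0n // mulrAC ler_pdivlMr ?ltr0n //.
by rewrite -!natrM ler_nat mulnC.
Qed.

Lemma ltr_frac_nat a b c d : 0 < b -> 0 < d ->
  (a%:R / b%:R < c%:R / d%:R :> rat)%R = (a * d < c * b).
Proof.
move=> b_gt0 d_gt0; rewrite ltr_pdivrMr ?ltr0n // mulrAC ltr_pdivlMr ?ltr0n //.
by rewrite -!natrM ltr_nat mulnC.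
Qed.

Local Open Scope group_scope.

Section Psi.

Variable gT : finGroupType.
Implicit Types (G H K : {group gT}) (x : gT).

Lemma psi_cycle x : psi <[x]> = psi_cyclic #[x].
Proof.
rewrite /psi /psi_cyclic /=.
have -> : <[x]> = [set x ^+ (nat_of_ord i) | i : 'I_#[x]].
  apply/setP => y; apply/idP/imsetP => [|[i _ ->]]; last exact: mem_cycle.
  by case/cyclePmin => i lti ->; exists (Ordinal lti).
rewrite big_imset /= => [|i j _ _ /eqP]; last first.
  by rewrite eq_expg_mod_order !modn_small // => /eqP; apply: val_inj.
by apply: eq_bigr => i _; rewrite orderXgcd gcdnC.
Qed.

Lemma psi_cyclic_card G : cyclic G -> psi G = psi_cyclic #|G|.
Proof. by case/cyclicP=> x def_G; rewrite /psi def_G -psi_cycle. Qed.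

Lemma psi_cyclic_card_gt0 G : 0 < psi_cyclic #|G|.
Proof. exact/psi_cyclic_gt0/cardG_gt0. Qed.

Lemma card_le_psi G : #|G| <= psi G.
Proof. by rewrite -sum1_card /psi leq_sum // => x _; apply: order_gt0. Qed.

Lemma psiS H K : H \subset K -> psi H <= psi K.
Proof.
by move=> sHK; rewrite /psi [X in _ <= X](big_setID H) /= (setIidPr sHK) leq_addr.
Qed.

Lemma psi_le_index G k :
  {in G, forall x, k <= #|G : <[x]>|} -> k * psi G <= #|G| ^ 2.
Proof.
move=> k_le; rewrite /psi big_distrr /= -mulnn -sum_nat_const.
apply: leq_sum => x Gx; have sxG : <[x]> \subset G by rewrite cycle_subG.
by rewrite -(Lagrange sxG) -orderE mulnC leq_mul2l k_le ?orbT.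
Qed.

Lemma psi_le_max_order G x : x \in G -> {in G, forall y, #[y] <= #[x]} ->
  psi G <= psi_cyclic #[x] + (#|G| - #[x]) * #[x].
Proof.
move=> Gx le_ord_x; have sxG : <[x]> \subset G by rewrite cycle_subG.
rewrite /psi (big_setID <[x]>) /= (setIidPr sxG) -psi_cycle leq_add2l.
rewrite [X in _ <= X * _](_ : _ = #|G :\: <[x]>|); last first.
  by rewrite cardsD (setIidPr sxG) orderE.
by rewrite -sum_nat_const leq_sum // => y /setDP[Gy _]; apply: le_ord_x.
Qed.

Lemma pdiv_le_index_cycle G x : ~~ cyclic G -> x \in G -> pdiv #|G| <= #|G : <[x]>|.
Proof.
move=> ncycG Gx; have sxG : <[x]> \subset G by rewrite cycle_subG.
apply: pdiv_min_dvd; last by rewrite -(Lagrange sxG) dvdn_mull.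
rewrite indexg_gt1; apply: contra ncycG => sGx.
by apply/cyclicP; exists x; apply/eqP; rewrite eqEsubset sGx sxG.
Qed.

(* K lies in the subgroup of index r of G, r the smallest prime dividing |G : K|. *)
Lemma psi_proper_cyclic G K : cyclic G -> odd #|G| -> K \proper G -> 7 * psi K <= psi G.
Proof.
move=> cycG oddG ltKG; have sKG := proper_sub ltKG.
have [y def_G] := cyclicP cycG.
set r := pdiv #|G : K|.
have pr_r : prime r by rewrite pdiv_prime // indexg_gt1 proper_subn.
have r_G : r %| #|G| by rewrite -(Lagrange sKG) dvdn_mull ?pdiv_dvd.
have r_ge3 : 3 <= r by apply: odd_prime_gt2 => //; apply: dvdn_odd r_G oddG.
have oyG : #[y] = #|G| by rewrite orderE def_G.
have sLG : <[y ^+ r]> \subset G by rewrite def_G cycleX.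
have sKL : K \subset <[y ^+ r]>.
  rewrite -(cardSg_cyclic cycG sKG sLG) -orderE orderXdiv oyG // -(Lagrange sKG).
  by rewrite -(divnK (pdiv_dvd #|G : K|)) mulnA mulnK ?prime_gt0 ?dvdn_mulr.
apply: leq_trans (_ : 7 * psi <[y ^+ r]> <= _); first by rewrite leq_mul2l psiS ?orbT.
rewrite psi_cycle orderXdiv oyG // psi_cyclic_card //.
exact: psi_cyclic_divp_ge7.
Qed.

End Psi.

Section CosetFibers.

Variable gT : finGroupType.
Implicit Types (G H K P : {group gT}) (u x : gT).

Lemma expgM_rcoset H u x k : u \in H -> x \in 'N(H) -> (u * x) ^+ k \in H :* x ^+ k.
Proof.
move=> Hu Nx; have NHu : u \in 'N(H) by apply: (subsetP (normG H)).
apply/rcoset_kercosetP; rewrite ?groupX ?groupM //.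
by rewrite !morphX ?groupM //= coset_kerl.
Qed.

Lemma psi_coset_partition G P : P <| G ->
  psi G = \sum_(c in G / P) #[c] * \sum_(y in G | coset P y == c) #[y ^+ #[c]].
Proof.
case/andP=> sPG nPG; rewrite /psi (partition_big (coset P) (mem (G / P))) /=.
  apply: eq_bigr => c _; rewrite big_distrr /=.
  apply: eq_bigr => y /andP[Gy /eqP <-]; have Ny := subsetP nPG y Gy.
  have dvd_c_y : #[coset P y] %| #[y] by apply: (morph_order (coset_morphism P)).
  by rewrite orderXdiv // mulnC divnK.
by move=> y Gy; apply: mem_quotient.
Qed.

Lemma big_coset_fiber G P x (F : gT -> nat) : P <| G -> x \in G ->
  \sum_(y in G | coset P y == coset P x) F y = \sum_(u in P) F (u * x)%g.
Proof.
case/andP=> sPG nPG Gx; have Nx := subsetP nPG x Gx.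
rewrite (eq_bigl [in P :* x]) => [|y /=]; last first.
  apply/andP/idP => [[Gy /eqP]|/rcosetP[u Pu ->]].
    by move/rcoset_kercosetP; apply; apply: (subsetP nPG).
  by rewrite groupM ?(subsetP sPG u) ?coset_kerl.
by rewrite -rcosetE big_imset //= => u v _ _; apply: mulIg.
Qed.

Lemma cyclic_pgroup_subset_total (p : nat) P H K :
  p.-group P -> cyclic P -> H \subset P -> K \subset P -> (H \subset K) || (K \subset H).
Proof.
move=> pP cycP sHP sKP.
rewrite -(cardSg_cyclic cycP sHP sKP) -(cardSg_cyclic cycP sKP sHP).
rewrite (card_pgroup (pgroupS sHP pP)) (card_pgroup (pgroupS sKP pP)).
case: (leqP (logn p #|H|) (logn p #|K|)) => [le_ij | /ltnW le_ji].
  by rewrite dvdn_exp2l.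
by rewrite (dvdn_exp2l _ le_ji) orbT.
Qed.

(* [~: P, <[x]>] and 'C_P(<[x]>) meet trivially, and one contains the other. *)
Lemma cent1_cyclic_pgroup (p : nat) P x : p.-group P -> cyclic P -> p^'.-elt x ->
  x \in 'N(P) -> x \notin 'C(P) -> 'C_P[x] = 1.
Proof.
move=> pP cycP p'x Nx nCx; rewrite -cent_cycle.
have nPX : <[x]> \subset 'N(P) by rewrite cycle_subG.
have TI_comm_cent := coprime_abel_cent_TI nPX (pnat_coprime pP p'x) (cyclic_abelian cycP).
have sRP : [~: P, <[x]>] \subset P by rewrite commg_subl.
case/orP: (cyclic_pgroup_subset_total pP cycP sRP (subsetIl P 'C(<[x]>))) => sub.
  have /commG1P : [~: P, <[x]>] = 1.
    by apply/trivgP; rewrite -TI_comm_cent subsetI subxx (subset_trans sub) ?subsetIr.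
  by rewrite centsC cycle_subG (negPf nCx).
by apply/trivgP; rewrite -TI_comm_cent subsetI sub subsetIr.
Qed.

End CosetFibers.

(* The number of Sylow p-subgroups is 1 mod p and divides #|G : <[x]>| < p. *)
Lemma small_index_Sylow (gT : finGroupType) (p : nat) (G : {group gT}) x :
  prime p -> x \in G -> #|G : <[x]>| < p ->
  p.-Sylow(G) <[x.`_p]> /\ <[x.`_p]> <| G.
Proof.
move=> pr_p Gx lt_ix_p; set P := <[x.`_p]>%G.
have sxG : <[x]> \subset G by rewrite cycle_subG.
have sPx : P \subset <[x]> by rewrite cycle_subG cycle_constt.
have p'ix : p^'.-nat #|G : <[x]>|.
  rewrite p'natE //; apply: contraL lt_ix_p => /(dvdn_leq (indexg_gt0 _ _)).
  by rewrite -leqNgt.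
have sylP : p.-Sylow(G) P.
  rewrite pHallE (subset_trans sPx sxG) -(Lagrange sxG) partnM ?cardG_gt0 //.
  by rewrite (part_p'nat p'ix) muln1 /= -!orderE order_constt.
have nPx : <[x]> \subset 'N_G(P).
  by rewrite subsetI sxG (sub_abelian_norm (cycle_abelian x)).
have lt_iN_p : #|G : 'N_G(P)| < p.
  rewrite (leq_ltn_trans _ lt_ix_p) // dvdn_leq ?indexg_gt0 //.
  by rewrite -(Lagrange_index (subsetIl G _) nPx) dvdn_mulr.
have := card_Syl_mod G pr_p; rewrite (card_Syl sylP) modn_small // => /index1g.
by move/(_ (subsetIl G _)) => def_G; split; rewrite // /normal (pHall_sub sylP) -def_G subsetIr.
Qed.

Section NormalCyclicSylow.

Variables (gT : finGroupType) (p : nat) (G P : {group gT}).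
Hypotheses (sylP : p.-Sylow(G) P) (nsPG : P <| G) (cycP : cyclic P).
Implicit Types (H : {group gT}) (x u : gT) (c : coset_of P).

Let sPG : P \subset G := normal_sub nsPG.
Let nPG : G \subset 'N(P) := normal_norm nsPG.
Let pP : p.-group P := pHall_pgroup sylP.

Lemma quotient_p'elt_rep H c : H \subset G -> c \in H / P ->
  exists x, [/\ x \in H, p^'.-elt x & c = coset P x].
Proof.
move=> sHG /morphimP[y _ Hy ->]; have sYH : <[y]> \subset H by rewrite cycle_subG.
have Py : y.`_p \in P.
  rewrite (mem_normal_Hall sylP nsPG) ?p_elt_constt //.
  by rewrite (subsetP sHG) // (subsetP sYH) ?cycle_constt.
exists y.`_p^'; split; rewrite ?p_elt_constt ?(subsetP sYH) ?cycle_constt //=.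
by rewrite -{1}(consttC p y) coset_kerl.
Qed.

Lemma expg_order_coset x : x \in G -> p^'.-elt x -> x ^+ #[coset P x] = 1.
Proof.
move=> Gx p'x; have Nx := subsetP nPG x Gx.
have Pxm : x ^+ #[coset P x] \in P.
  by apply: coset_idr; rewrite ?groupX // morphX // expg_order.
by apply/eqP; rewrite -order_eq1 (pnat_1 (mem_p_elt pP Pxm) (p_eltX _ p'x)).
Qed.

Lemma expgM_order_coset x u : x \in G -> p^'.-elt x -> u \in P ->
  (u * x) ^+ #[coset P x] \in <[u]>.
Proof.
move=> Gx p'x Pu; have charU : <[u]> \char P by rewrite sub_cyclic_char ?cycle_subG.
have nUx := subsetP (normal_norm (char_normal_trans charU nsPG)) x Gx.
have := @expgM_rcoset _ _ u x #[coset P x] (cycle_id u) nUx.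
by rewrite expg_order_coset // mem_rcoset invg1 mulg1.
Qed.

Lemma coset_fiber_sum_le x : x \in G -> p^'.-elt x ->
  \sum_(y in G | coset P y == coset P x) #[y ^+ #[coset P x]] <= psi P.
Proof.
move=> Gx p'x; rewrite (big_coset_fiber (fun y => #[y ^+ _]) nsPG Gx).
apply: leq_sum => u Pu; apply: dvdn_leq (order_gt0 u) _.
by rewrite !orderE cardSg // cycle_subG expgM_order_coset.
Qed.

(* Each (u * x) ^+ #[coset P x] lies in P and commutes with u and with u * x,
   hence with x: it lies in 'C_P[x] = 1. *)
Lemma coset_fiber_sum_noncent x : x \in G -> p^'.-elt x -> x \notin 'C(P) ->
  \sum_(y in G | coset P y == coset P x) #[y ^+ #[coset P x]] = #|P|.
Proof.
move=> Gx p'x nCx; rewrite (big_coset_fiber (fun y => #[y ^+ _]) nsPG Gx).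
have CPx1 := cent1_cyclic_pgroup pP cycP p'x (subsetP nPG x Gx) nCx.
rewrite -sum1_card; apply: eq_bigr => u Pu; set w := (u * x) ^+ _.
have Pw : w \in P by apply: subsetP (expgM_order_coset Gx p'x Pu); rewrite cycle_subG.
have cw_ux : commute w (u * x) by apply/commute_sym/commuteX.
have cw_u : commute w u by apply: (centsP (cyclic_abelian cycP)).
have cw_x : commute w x by apply: (mulgI u); rewrite /commute mulgA -cw_u -mulgA cw_ux mulgA.
have : w \in 'C_P[x] by rewrite inE Pw; apply/cent1P.
by rewrite CPx1 => /set1P ->; rewrite order1.
Qed.

Lemma psi_le_sum_quotient :
  psi G <= \sum_(c in G / P) #[c] * (if c \in 'C_G(P) / P then psi P else #|P|).
Proof.
rewrite (psi_coset_partition nsPG); apply: leq_sum => c Qc.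
rewrite leq_mul2l; apply/orP; right.
have [x [Gx p'x ->]] := quotient_p'elt_rep (subxx G) Qc.
case: ifP => [_ | nCc]; first exact: coset_fiber_sum_le.
rewrite coset_fiber_sum_noncent //; apply: contraFN nCc => Cx.
by rewrite mem_quotient // inE Gx.
Qed.

Lemma psi_le_mul_quotient : psi G <= psi P * psi (G / P).
Proof.
apply: leq_trans psi_le_sum_quotient _; rewrite [X in _ <= _ * X]/psi big_distrr /=.
apply: leq_sum => c _; rewrite mulnC leq_mul2r.
by case: ifP => _; rewrite ?leqnn ?card_le_psi orbT.
Qed.

Lemma psi_le_cent_quotient :
  psi G <= psi P * psi ('C_G(P) / P) + #|P| * psi (G / P).
Proof.
set K := 'C_G(P) / P; have sKQ : K \subset G / P by rewrite quotientS ?subsetIl.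
have -> : psi K = \sum_(c in G / P) (if c \in K then #[c] else 0).
  rewrite /psi -big_mkcondr /=; apply: eq_bigl => c.
  by rewrite andb_idl // => /(subsetP sKQ).
apply: leq_trans psi_le_sum_quotient _; rewrite [X in _ <= _ + _ * X]/psi.
rewrite !big_distrr -big_split /=; apply: leq_sum => c _.
by case: ifP => _; rewrite ?muln0 ?add0n mulnC ?leq_addr.
Qed.

Lemma psi_cyclic_card_Sylow : psi_cyclic #|G| = (psi P * psi_cyclic #|G / P|)%N.
Proof.
have /andP[_ coPiP] := pHall_Hall sylP.
rewrite card_quotient // (psi_cyclic_card cycP).
by rewrite -psi_cyclicM ?cardG_gt0 ?indexg_gt0 ?Lagrange.
Qed.

(* Otherwise a generator u of P times a p'-element lifting a generator of G / P
   generates G. *)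
Lemma cent_quotient_proper : ~~ cyclic G -> cyclic (G / P) -> 'C_G(P) / P \proper G / P.
Proof.
move=> ncycG /cyclicP[c def_Q]; rewrite properEneq quotientS ?subsetIl // andbT.
apply: contra ncycG => /eqP def_CQ; have [u def_P] := cyclicP cycP.
have : c \in 'C_G(P) / P by rewrite def_CQ def_Q cycle_id.
case/(quotient_p'elt_rep (subsetIl G _)) => x [/setIP[Gx Cx] p'x def_c].
have Pu : u \in P by rewrite def_P cycle_id.
have cux : commute u x by apply/commute_sym/(centP Cx).
have co_ux : coprime #[u] #[x] := pnat_coprime (mem_p_elt pP Pu) p'x.
apply/cyclicP; exists (u * x); apply/eqP; rewrite eq_sym eqEcard cycle_subG.
rewrite groupM ?(subsetP sPG u Pu) //= -orderE orderM // -(Lagrange sPG) -card_quotient //.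
have oP : #|P| = #[u] by rewrite def_P.
rewrite def_Q -orderE def_c oP leq_mul2l dvdn_leq ?orbT //.
by apply: (morph_order (coset_morphism P)); apply: (subsetP nPG).
Qed.

Lemma psi'_le_quotient : (psi' G <= psi' (G / P))%R.
Proof.
rewrite /psi' ler_frac_nat ?psi_cyclic_card_gt0 // psi_cyclic_card_Sylow.
by rewrite mulnCA mulnA leq_mul2r psi_le_mul_quotient orbT.
Qed.

(* 28 psi(G) <= 28 psi(P) psi(K) + 28 |P| psi(G / P)
             <= 4 psi(P) psi(G / P) + 7 psi(P) psi(G / P). *)
Lemma psi'_le_cyclic_quotient : prime p -> (5 <= p)%N -> p %| #|G| -> odd #|G| ->
  ~~ cyclic G -> cyclic (G / P) -> (psi' G <= 11%:R / 28%:R)%R.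
Proof.
move=> pr_p p_ge5 p_G oddG ncycG cycQ; set K := ('C_G(P) / P)%G.
have oddQ : odd #|G / P| by apply: dvdn_odd oddG; apply/dvdn_quotient.
have le_K_Q : (7 * psi K <= psi (G / P))%N.
  exact: psi_proper_cyclic (cent_quotient_proper ncycG cycQ).
have le_P_psiP : (4 * #|P| <= psi P)%N.
  have k_gt0 : (0 < logn p #|P|)%N.
    by rewrite (card_Hall sylP) logn_part logn_gt0 mem_primes pr_p cardG_gt0 p_G.
  by rewrite (psi_cyclic_card cycP) (card_pgroup pP) psi_cyclic_primeX_ge4.
have := psi_le_cent_quotient.
rewrite /psi' ler_frac_nat ?psi_cyclic_card_gt0 // psi_cyclic_card_Sylow.
rewrite -(psi_cyclic_card cycQ) -/K.
move: (psi G) (psi P) (psi K) (psi (G / P)) #|P| le_K_Q le_P_psiP => g a b c d; nia.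
Qed.

End NormalCyclicSylow.

Lemma psi'_le_large_index (gT : finGroupType) (G : {group gT}) p q : (0 < q <= p)%N ->
  {in G, forall x, p <= #|G : <[x]>|}%N ->
  (forall r, prime r -> r %| #|G| -> q <= r <= p)%N ->
  (psi' G <= p.+1%:R / (p * q)%N%:R)%R.
Proof.
move=> /andP[q_gt0 le_qp] le_p_index qp_primes.
rewrite /psi' ler_frac_nat ?psi_cyclic_card_gt0 ?muln_gt0 ?q_gt0 ?(leq_trans q_gt0) //.
apply: leq_trans (_ : q * #|G| ^ 2 <= _)%N.
  by rewrite mulnC [(p * q)%N]mulnC -mulnA leq_mul2l psi_le_index ?orbT.
apply: sqr_le_psi_cyclic => [||r pr_r r_G]; [exact: cardG_gt0 | exact: leqW |].
by rewrite ltnS; apply: qp_primes.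
Qed.

(* With t = #[x] and |G| = 3 t: 4 psi(C_t) = 3 t^2 + 1, 4 psi(C_|G|) = 27 t^2 + 1,
   and psi(G) <= psi(C_t) + 2 t^2. *)
Lemma psi_3group_index3 (gT : finGroupType) (G : {group gT}) x :
  3.-group G -> x \in G -> #|G : <[x]>| = 3 ->
  {in G, forall y, 3 <= #|G : <[y]>|}%N ->
  (43 * psi G < 19 * psi_cyclic #|G|)%N.
Proof.
move=> pG Gx ix3 index_ge3; have sxG : <[x]> \subset G by rewrite cycle_subG.
have oGx : #|G| = (3 * #[x])%N by rewrite -(Lagrange sxG) ix3 mulnC orderE.
have le_ord_x : {in G, forall y, #[y] <= #[x]}%N.
  move=> y Gy; have syG : <[y]> \subset G by rewrite cycle_subG.
  rewrite -(leq_pmul2l (isT : 0 < 3)%N) -oGx -(Lagrange syG) -orderE mulnC.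
  by rewrite leq_pmul2l ?order_gt0 //; apply: index_ge3.
have [j ox] := p_natP (mem_p_elt pG Gx).
have psi_x := psi_cyclic_primeX j (isT : prime 3).
have psi_G := psi_cyclic_primeX j.+1 (isT : prime 3).
have oG : #|G| = (3 ^ j.+1)%N by rewrite oGx ox expnS.
rewrite -ox (_ : 2 * j + 1 = 1 + j + j)%N ?expnD -?ox in psi_x; last by lia.
rewrite -oG (_ : 2 * j.+1 + 1 = 3 + j + j)%N ?expnD -?ox in psi_G; last by lia.
have le_psi_G := psi_le_max_order Gx le_ord_x; rewrite oGx in le_psi_G.
have := order_gt0 x; move: (psi_cyclic #|G|) psi_G => b psi_G.
move: (psi_cyclic #[x]) psi_x le_psi_G => a psi_x le_psi_G.
move: (psi G) (#[x]) psi_x psi_G le_psi_G => g t; nia.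
Qed.

Lemma psi'_lt_3group (gT : finGroupType) (G : {group gT}) :
  ~~ cyclic G -> 3.-group G -> (psi' G < 19%:R / 43%:R)%R.
Proof.
move=> ncycG pG; have [k oG] := p_natP pG; have psic_gt0 := psi_cyclic_card_gt0 G.
have k_gt0 : (0 < k)%N.
  by case: k oG => // oG; case/negP: ncycG; rewrite cyclic_small ?oG.
have index_ge3 : {in G, forall x, 3 <= #|G : <[x]>|}%N.
  move=> x Gx; have := pdiv_le_index_cycle ncycG Gx.
  by rewrite oG -(prednK k_gt0) pdiv_pfactor.
rewrite /psi' ltr_frac_nat // [(_ * 43)%N]mulnC.
case: (boolP [exists x in G, #|G : <[x]>| == 3]) => [/exists_inP[x Gx /eqP ix3] |].
  exact: psi_3group_index3 ix3 index_ge3.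
rewrite negb_exists_in => /forall_inP index_ne3.
have index_ge9 : {in G, forall x, 9 <= #|G : <[x]>|}%N.
  move=> x Gx; have sxG : <[x]> \subset G by rewrite cycle_subG.
  have : #|G : <[x]>| %| 3 ^ k by rewrite -oG -(Lagrange sxG) dvdn_mull.
  case/dvdn_pfactor=> // j _ ij; have := index_ge3 x Gx; have := index_ne3 x Gx.
  by rewrite ij; case: j {ij} => [|[|j]] //; rewrite !expnS mulnA leq_pmulr // expn_gt0.
have := psi_le_index index_ge9.
have : (3 * #|G| ^ 2 <= 4 * psi_cyclic #|G|)%N.
  apply: sqr_le_psi_cyclic => // r pr_r.
  by rewrite oG Euclid_dvdX // dvdn_prime2 // => /andP[/eqP -> _].
move: (psi G) (#|G| ^ 2)%N psic_gt0 => g n2; lia.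
Qed.

Lemma psi'_noncyclic_cases q (gT : finGroupType) (G : {group gT}) : (3 <= q)%N ->
  ~~ cyclic G -> (forall r, prime r -> r %| #|G| -> q <= r)%N ->
  [\/ exists P : {group gT},
        [/\ #|G / P| < #|G|, ~~ cyclic (G / P) & (psi' G <= psi' (G / P))%R]%N,
      (psi' G <= 11%:R / 28%:R)%R,
      (psi' G <= 6%:R / (5 * q)%N%:R)%R
    | (q <= 3)%N /\ (psi' G < 19%:R / 43%:R)%R].
Proof.
move=> q_ge3 ncycG q_primes.
have G_gt1 : (1 < #|G|)%N by have := contra (@cyclic_small _ G) ncycG; lia.
have [p [pr_p p_G le_primes_p]] :
    exists p, [/\ prime p, p %| #|G| & forall r, prime r -> r %| #|G| -> r <= p]%N.
  exists (max_pdiv #|G|); split; [exact: max_pdiv_prime | exact: max_pdiv_dvd |].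
  by move=> r pr_r r_G; rewrite max_pdiv_max // mem_primes pr_r cardG_gt0.
have le_q_p := q_primes p pr_p p_G.
have ne_p_4 : p != 4 by apply: contraTneq pr_p => ->.
case: (boolP [exists x in G, #|G : <[x]>| < p]) => [/exists_inP[x Gx lt_ix_p] |].
  have [sylP nsPG] := small_index_Sylow pr_p Gx lt_ix_p.
  have cycP := cycle_cyclic x.`_p.
  case: (boolP (cyclic (G / <[x.`_p]>))) => [cycQ | ncycQ].
    have p_ge5 : (5 <= p)%N.
      have := pdiv_le_index_cycle ncycG Gx.
      have := q_primes _ (pdiv_prime G_gt1) (pdiv_dvd _); lia.
    have oddG : odd #|G|.
      by rewrite -[odd _]negbK -dvdn2; apply/negP => /(q_primes 2 isT); lia.
    by apply: Or42; apply: psi'_le_cyclic_quotient sylP nsPG cycP pr_p p_ge5 p_G oddG ncycG cycQ.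
  apply: Or41; exists <[x.`_p]>%G; split=> //; last exact: psi'_le_quotient sylP nsPG cycP.
  rewrite ltn_quotient ?(pHall_sub sylP) //.
  by rewrite -cardG_gt1 (card_Hall sylP) p_part_gt1 mem_primes pr_p cardG_gt0 p_G.
rewrite negb_exists_in => /forall_inP p_le_index.
have le_p_index : {in G, forall x, p <= #|G : <[x]>|}%N.
  by move=> x /p_le_index; rewrite -leqNgt.
have qp_primes r : prime r -> r %| #|G| -> (q <= r <= p)%N.
  by move=> pr_r r_G; rewrite q_primes ?le_primes_p.
have [p_ge5 | p_lt5] := leqP 5 p.
  apply: Or43; apply: le_trans (psi'_le_large_index _ le_p_index qp_primes) _.
    by rewrite le_q_p; lia.
  by rewrite ler_frac_nat ?muln_gt0; nia.
have p3 : p = 3 by move: ne_p_4; lia.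
apply: Or44; split; first by rewrite -p3.
apply: psi'_lt_3group ncycG _; apply/pnatP => // r pr_r r_G.
by have := qp_primes r pr_r r_G; rewrite inE; lia.
Qed.

Section PsiRatioBound.

Variables (q : nat) (t : rat).
Hypotheses (q_ge3 : (3 <= q)%N)
  (t_gt_large_index : (6%:R / (5 * q)%N%:R < t)%R)
  (t_gt_cyclic_quotient : (11%:R / 28%:R < t)%R)
  (t_ge_3group : (q <= 3)%N -> (19%:R / 43%:R <= t)%R).

Lemma psi'_lt_bound n (gT : finGroupType) (G : {group gT}) : (#|G| <= n)%N ->
  ~~ cyclic G -> (forall r, prime r -> r %| #|G| -> q <= r)%N -> (psi' G < t)%R.
Proof.
elim: n gT G => [|n IHn] gT G le_G_n ncycG q_primes.
  by rewrite leqNgt cardG_gt0 in le_G_n.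
case: (psi'_noncyclic_cases q_ge3 ncycG q_primes).
- case=> P [ltQG ncycQ le_psi'].
  apply: le_lt_trans le_psi' (IHn _ _ (leq_trans ltQG le_G_n) ncycQ _) => r pr_r r_Q.
  exact/q_primes/(dvdn_trans r_Q)/dvdn_quotient.
- by move=> le_psi'; apply: le_lt_trans le_psi' t_gt_cyclic_quotient.
- by move=> le_psi'; apply: le_lt_trans le_psi' t_gt_large_index.
- by case=> /t_ge_3group le_t lt_psi'; apply: lt_le_trans lt_psi' le_t.
Qed.

End PsiRatioBound.

Theorem lemma3p1 (gT : finGroupType) (G : {group gT}) :
  ~~ cyclic G ->
  ((19%:R / 43%:R <= psi' G)%R -> (2 %| #|G|)%N) /\
  ((31%:R / 77%:R < psi' G)%R -> (2 %| #|G|)%N || (3 %| #|G|)%N).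
Proof.
move=> ncycG; split.
  apply: contraTT => not2; rewrite -ltNge.
  apply: (@psi'_lt_bound 3 _ isT _ _ (fun _ => lexx _) _ _ _ (leqnn _) ncycG).
  - by rewrite ltr_frac_nat.
  - by rewrite ltr_frac_nat.
  by move=> r pr_r r_G; rewrite ltn_neqAle prime_gt1 // andbT; apply: contraNneq not2 => ->.
apply: contraTT => /norP[not2 not3]; rewrite -leNgt; apply/ltW.
apply: (@psi'_lt_bound 5 _ isT _ _ _ _ _ _ (leqnn _) ncycG).
- by rewrite ltr_frac_nat.
- by rewrite ltr_frac_nat.
- by case/notF.
move=> r pr_r r_G; case: r pr_r r_G => [|[|[|[|[|r]]]]] // _ r_G.
  by rewrite r_G in not2.
by rewrite r_G in not3.
Qed.
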